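(* $B(2)=1$, $B(3)=2$, $B(4)=4$, and $B(5)=6$.
   Context: Fix a field $\mathbb{F}$. All algebras are finite-dimensional, unital, not necessarily associative $\mathbb{F}$-algebras. For a finite generating set $S$ of an algebra $\mathcal{A}$, a word in $S$ is any product (with any bracketing) of finitely many elements of $S$; its length is the number of factors, and $1$ is a word of length $0$. $L_i(S)$ is the linear span of all words in $S$ of length at most $i$. The length of $S$ is $l(S)=\min\{k\ge0: L_k(S)=\mathcal{A}\}$, and $l(\mathcal{A})=\max\{l(S): S\text{ a finite generating set of }\mathcal{A}\}$. For a natural number $n\ge2$, $B(n)$ denotes the maximal integer $l>0$ such that for every $j\in\{1,\ldots,l\}$ there exists an algebra of dimension $n$ and length $j$. *)

From HB Require Import structures.
From mathcomp Require Import all_boot all_order all_algebra.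
Set Implicit Arguments. Unset Strict Implicit. Unset Printing Implicit Defensive.
Import GRing.Theory.
Local Open Scope ring_scope.

(* A unital, not necessarily associative algebra of dimension n over F,
   realised (up to isomorphism) on the coordinate space 'rV[F]_n:
   a bilinear multiplication with a two-sided identity element. *)
Record nalg (F : fieldType) (n : nat) := NAlg {
  amul : 'rV[F]_n -> 'rV[F]_n -> 'rV[F]_n;
  aone : 'rV[F]_n;
  amul_linl : forall (a : F) x y z, amul (a *: x + y) z = a *: amul x z + amul y z;
  amul_linr : forall (a : F) x y z, amul z (a *: x + y) = a *: amul z x + amul z y;
  amul1l : forall x, amul aone x = x;
  amul1r : forall x, amul x aone = x
}.

Inductive is_word (F : fieldType) (n : nat) (A : nalg F n) (S : seq 'rV[F]_n)
  : nat -> 'rV[F]_n -> Prop :=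
| word_one : is_word A S 0 (aone A)
| word_gen : forall s, s \in S -> is_word A S 1 s
| word_mul : forall (i j : nat) x y, (0 < i)%N -> (0 < j)%N ->
    is_word A S i x -> is_word A S j y -> is_word A S (i + j)%N (amul A x y).

Definition inL (F : fieldType) (n : nat) (A : nalg F n) (S : seq 'rV[F]_n)
  (k : nat) (v : 'rV[F]_n) : Prop :=
  exists (m : nat) (c : 'I_m -> F) (w : 'I_m -> 'rV[F]_n),
    (forall i, exists d, (d <= k)%N /\ is_word A S d (w i)) /\
    v = \sum_(i < m) c i *: w i.

Definition L_full (F : fieldType) (n : nat) (A : nalg F n) (S : seq 'rV[F]_n)
  (k : nat) : Prop := forall v, inL A S k v.

Definition generates (F : fieldType) (n : nat) (A : nalg F n) (S : seq 'rV[F]_n)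
  : Prop := exists k, L_full A S k.

Definition set_length (F : fieldType) (n : nat) (A : nalg F n) (S : seq 'rV[F]_n)
  (k : nat) : Prop :=
  L_full A S k /\ forall k', L_full A S k' -> (k <= k')%N.

Definition alg_length (F : fieldType) (n : nat) (A : nalg F n) (l : nat) : Prop :=
  (exists S, generates A S /\ set_length A S l) /\
  (forall S k, generates A S -> set_length A S k -> (k <= l)%N).

Definition all_lengths (F : fieldType) (n l : nat) : Prop :=
  forall j, (1 <= j <= l)%N -> exists A : nalg F n, alg_length A j.

Definition isB (F : fieldType) (n b : nat) : Prop :=
  (0 < b)%N /\ all_lengths F n b /\
  (forall l, (0 < l)%N -> all_lengths F n l -> (l <= b)%N).

(* For a generating set S, the spans L_0 <= L_1 <= ... of words of bounded
   length form a chain of subspaces with dim L_0 = 1.  If l(S) = l, then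
   L_(l-1) < L_l, and L_j < L_(max(2j, j+1)) for every j < l: otherwise every
   word splits into two factors lying in L_j and the chain stabilises at j.
   Counting strict inclusions rules out length 2 in dimension 2, length 3 in
   dimension 3 and length 5 in dimension 4 (L_0 < L_1 < L_2 < L_4 < L_5).  In
   dimension 5, length 7 would force L_2 = L_3 and L_4 = L_5 = L_6 (any other
   strict inclusion gives a chain of six subspaces), and then every word of
   length 7 splits into factors whose product lies in L_6.
   Conversely, take the algebra with basis e_0 = 1, e_1, ..., e_m of degrees
   d_i, where e_i e_j is a basis vector of degree d_i + d_j or 0.  After
   removing their constant terms, generators only have components of positive
   degree, so words of length d have degree at least d and every generating
   set has length at most max d_i; if each basis vector of degree > 1 is a
   product of two basis vectors, the degree-one basis vectors reach every e_i
   but need max d_i factors for the top one.  Explicit degree sequences give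
   all lengths up to 1, 2, 4, 6 in dimensions 2, 3, 4, 5. *)

From mathcomp Require Import all_boot all_order all_algebra.
From mathcomp Require Import zify.
From Stdlib Require Import Classical.
Set Implicit Arguments. Unset Strict Implicit. Unset Printing Implicit Defensive.
Import GRing.Theory.
Local Open Scope ring_scope.

Section LinClosed.
Variables (F : fieldType) (n : nat).
Implicit Types (Q : 'rV[F]_n -> Prop) (s : seq 'rV[F]_n).

Definition lin_closed Q := Q 0 /\ forall (a : F) x y, Q x -> Q y -> Q (a *: x + y).

Lemma lin_closed_sum Q m (c : 'I_m -> F) (w : 'I_m -> 'rV[F]_n) :
  lin_closed Q -> (forall i, Q (w i)) -> Q (\sum_(i < m) c i *: w i).
Proof. by move=> [Q0 QD] Qw; elim/big_rec: _ => // i acc _; apply: QD. Qed.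

Lemma lin_closed_span Q s v :
  lin_closed Q -> {in s, forall x, Q x} -> v \in <<s>>%VS -> Q v.
Proof.
move=> linQ Qs sv; have sv' : v \in <<in_tuple s>>%VS by [].
by rewrite (coord_span sv'); apply: lin_closed_sum => // i; apply/Qs/mem_nth.
Qed.

Lemma free_size s : free s -> (size s <= n)%N.
Proof.
by move=> /eqP <-; have := dimvS (subvf <<s>>%VS); rewrite dimvf /dim /= mul1n.
Qed.

Lemma strict_chain_dim (Q : nat -> 'rV[F]_n -> Prop) r :
  (forall k, lin_closed (Q k)) ->
  (forall k, (k < r)%N -> forall v, Q k v -> Q k.+1 v) ->
  (forall k, (k < r)%N -> exists2 v, Q k.+1 v & ~ Q k v) ->
  (exists2 v, Q 0%N v & v != 0) -> (r < n)%N.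
Proof.
move=> linQ incQ strictQ [v0 Qv0 v0_neq0].
suff [s [free_s sQ <-]] :
    exists s, [/\ free s, {in s, forall x, Q r x} & size s = r.+1].
  exact: free_size.
elim: r incQ strictQ => [|k IHk] incQ strictQ.
  by exists [:: v0]; split; rewrite ?seq1_free // => x /[!inE] /eqP ->.
have [|s [free_s sQ size_s]] := IHk (fun j jk => incQ j (ltnW jk)).
  by move=> j jk; apply: strictQ (ltnW jk).
have [v Qv notQv] := strictQ k (ltnSn k).
exists (v :: s); split; rewrite /= ?size_s //.
- rewrite free_cons free_s andbT; apply: contra_notN notQv.
  exact: lin_closed_span.
- by move=> x /[!inE] /predU1P [-> // | /sQ /incQ]; apply.
Qed.

End LinClosed.

Section Words.
Variables (F : fieldType) (n : nat) (A : nalg F n).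
Implicit Types (S : seq 'rV[F]_n) (x y z : 'rV[F]_n).

Lemma amul0l z : amul A 0 z = 0.
Proof.
have := amul_linl A 1 0 0 z; rewrite !scale1r addr0 => /esym.
by move/(canRL (addrK _)); rewrite subrr.
Qed.

Lemma amul0r z : amul A z 0 = 0.
Proof.
have := amul_linr A 1 0 0 z; rewrite !scale1r addr0 => /esym.
by move/(canRL (addrK _)); rewrite subrr.
Qed.

Lemma amul_suml m (c : 'I_m -> F) w y :
  amul A (\sum_(i < m) c i *: w i) y = \sum_(i < m) c i *: amul A (w i) y.
Proof. by elim/big_rec2: _ => [|i a b _ <-]; rewrite ?amul0l ?amul_linl. Qed.

Lemma amul_sumr m (c : 'I_m -> F) w y :
  amul A y (\sum_(i < m) c i *: w i) = \sum_(i < m) c i *: amul A y (w i).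
Proof. by elim/big_rec2: _ => [|i a b _ <-]; rewrite ?amul0r ?amul_linr. Qed.

Lemma is_word0 S w : is_word A S 0 w -> w = aone A.
Proof.
suff: forall d, d = 0%N -> is_word A S d w -> w = aone A by apply.
by move=> d + wd; case: wd => // i j x y i_gt0 j_gt0 _ _; lia.
Qed.

Lemma is_word_mul S a b x y :
  is_word A S a x -> is_word A S b y -> is_word A S (a + b) (amul A x y).
Proof.
case: a => [/is_word0 -> | a wx]; first by rewrite amul1l.
case: b => [/is_word0 -> | b wy]; first by rewrite amul1r addn0.
exact: word_mul.
Qed.

Variable S : seq 'rV[F]_n.

Lemma inL_ind k (Q : 'rV[F]_n -> Prop) v : lin_closed Q ->
  (forall d w, (d <= k)%N -> is_word A S d w -> Q w) -> inL A S k v -> Q v.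
Proof.
move=> linQ Qw [m [c [w [wk ->]]]]; apply: lin_closed_sum => // i.
by have [d [dk wd]] := wk i; apply: Qw wd.
Qed.

Lemma lin_closed_inL k : lin_closed (inL A S k).
Proof.
split.
  by exists 0%N, (fun=> 0), (fun=> 0); rewrite big_ord0; split=> // -[].
move=> a x y [m1 [c1 [w1 [wk1 ->]]]] [m2 [c2 [w2 [wk2 ->]]]].
exists (m1 + m2)%N.
exists (fun i => match split i with inl i1 => a * c1 i1 | inr i2 => c2 i2 end).
exists (fun i => match split i with inl i1 => w1 i1 | inr i2 => w2 i2 end).
split; first by move=> i; case: (split i).
rewrite big_split_ord scaler_sumr; congr (_ + _); apply: eq_bigr => i _.
  by rewrite -[lshift m2 i]/(unsplit (inl i)) unsplitK scalerA.
by rewrite -[rshift m1 i]/(unsplit (inr i)) unsplitK.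
Qed.

Lemma inL_word k d w : (d <= k)%N -> is_word A S d w -> inL A S k w.
Proof.
move=> dk wd; exists 1%N, (fun=> 1), (fun=> w).
by rewrite big_ord1 scale1r; split=> // _; exists d.
Qed.

Lemma inL_one k : inL A S k (aone A).
Proof. exact: inL_word (leq0n k) (word_one A S). Qed.

Lemma inL_le a b v : (a <= b)%N -> inL A S a v -> inL A S b v.
Proof.
move=> ab; apply: inL_ind; first exact: lin_closed_inL.
by move=> d w da; apply: inL_word (leq_trans da ab).
Qed.

Lemma inL_mul a b x y : inL A S a x -> inL A S b y -> inL A S (a + b) (amul A x y).
Proof.
move=> [m [c [w [wa ->]]]] [m' [c' [w' [wb ->]]]].
rewrite amul_suml; apply: lin_closed_sum => [|i]; first exact: lin_closed_inL.
rewrite amul_sumr; apply: lin_closed_sum => [|j]; first exact: lin_closed_inL.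
have [[d [da wd]] [d' [db wd']]] := (wa i, wb j).
exact: inL_word (leq_add da db) (is_word_mul wd wd').
Qed.

Definition L_incl a b := forall v, inL A S a v -> inL A S b v.

Lemma L_incl_le a b : (a <= b)%N -> L_incl a b.
Proof. by move=> ab v; apply: inL_le. Qed.

Lemma L_incl_trans a b c : L_incl a b -> L_incl b c -> L_incl a c.
Proof. by move=> ab bc v /ab /bc. Qed.

Lemma not_L_incl_lt a b : ~ L_incl b a -> (a < b)%N.
Proof. by rewrite ltnNge => ba; apply/negP => /L_incl_le. Qed.

Lemma not_L_incl_widen a b a' b' :
  ~ L_incl b a -> (a' <= a)%N -> (b <= b')%N -> ~ L_incl b' a'.
Proof.
move=> ba a'a bb' b'a'; apply: ba.
exact: L_incl_trans (L_incl_le bb') (L_incl_trans b'a' (L_incl_le a'a)).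
Qed.

Lemma not_L_inclP a b : ~ L_incl b a -> exists2 v, inL A S b v & ~ inL A S a v.
Proof.
move=> /not_all_ex_not [v /(imply_to_and (inL A S b v)) [Lv notLv]].
by exists v.
Qed.

Lemma L_incl_succ (r : nat -> nat) m : (0 < m)%N ->
  (forall i, (0 < i <= m)%N -> L_incl i (r i)) ->
  (forall i j, (0 < i)%N -> (0 < j)%N -> (i + j = m.+1)%N -> (r i + r j <= m)%N) ->
  L_incl m.+1 m.
Proof.
move=> m_gt0 reduce r_add v; apply: inL_ind => [|d w dm wd].
  exact: lin_closed_inL.
case: (ltnP m d) => [md | dm']; last exact: inL_word wd.
case: wd dm md => [|s _|i j x y i_gt0 j_gt0 wx wy] ij_m ij_gt; try lia.
have Li : inL A S (r i) x by apply: reduce (inL_word (leqnn i) wx); lia.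
have Lj : inL A S (r j) y by apply: reduce (inL_word (leqnn j) wy); lia.
by apply: inL_le (inL_mul Li Lj); apply: r_add; lia.
Qed.

Lemma L_incl_stable j : L_incl (maxn (2 * j) j.+1) j -> forall k, L_incl k j.
Proof.
move=> top_j; elim/ltn_ind => k IHk.
case: (leqP k (maxn (2 * j) j.+1)) => [k_le | k_gt].
  exact: L_incl_trans (L_incl_le k_le) top_j.
case: k k_gt IHk => // k k_gt IHk.
apply: L_incl_trans (IHk k (ltnSn k)).
apply: (@L_incl_succ (minn ^~ j)) => [|i i_le|i i' *]; try lia.
by case: (leqP i j) => ij; [apply: L_incl_le | apply: IHk]; lia.
Qed.

Lemma set_length_strict l j : set_length A S l -> (j < l)%N ->
  ~ L_incl (maxn (2 * j) j.+1) j.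
Proof.
move=> [full minl] jl /L_incl_stable stable.
have : L_full A S j by move=> v; apply: stable (full v).
by move=> /minl; rewrite leqNgt jl.
Qed.

Lemma set_length_last l : set_length A S l.+1 -> ~ L_incl l.+1 l.
Proof.
move=> [full minl] incl.
have : L_full A S l by move=> v; apply: incl (full v).
by move=> /minl; rewrite ltnn.
Qed.

End Words.

Lemma inL_transfer (F : fieldType) (n : nat) (A : nalg F n) (S T : seq 'rV[F]_n) k v :
  {in T, forall t, inL A S 1 t} -> inL A T k v -> inL A S k v.
Proof.
move=> TS; apply: inL_ind => [|d w dk wd]; first exact: lin_closed_inL.
apply: inL_le dk _; elim: wd => {d w} [|t /TS //|i j x y _ _ _ Sx _ Sy].
  exact: inL_one.
exact: inL_mul.
Qed.

Lemma aone_neq0 (F : fieldType) (n : nat) (A : nalg F n.+1) : aone A != 0.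
Proof.
apply/eqP => one0; have /matrixP/(_ 0 0) := amul1l A (delta_mx 0 0).
by rewrite one0 amul0l !mxE /= => /eqP; rewrite eq_sym oner_eq0.
Qed.

Lemma L_chain_size (F : fieldType) (n : nat) (A : nalg F n.+1) S (idx : seq nat) :
  (forall k, (k.+1 < size idx)%N -> ~ L_incl A S (nth 0%N idx k.+1) (nth 0%N idx k)) ->
  (size idx <= n.+1)%N.
Proof.
case: idx => [//|a idx] strict.
apply: (@strict_chain_dim F n.+1 (fun k => inL A S (nth 0%N (a :: idx) k))).
- by move=> k; apply: lin_closed_inL.
- by move=> k k_lt; apply/L_incl_le/ltnW/not_L_incl_lt/strict.
- by move=> k /strict /not_L_inclP.
- by exists (aone A); [apply: inL_one | apply: aone_neq0].
Qed.

Section UpperBounds.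
Variable F : fieldType.

Lemma no_length2_in_dim2 (A : nalg F 2) S : ~ set_length A S 2.
Proof.
move=> len2; suff: (3 <= 2)%N by [].
apply: (@L_chain_size _ _ A S [:: 0; 1; 2]%N) => -[|[|k]] //= _.
- exact: set_length_strict len2 (_ : 0 < 2)%N.
- exact: set_length_last len2.
Qed.

Lemma no_length3_in_dim3 (A : nalg F 3) S : ~ set_length A S 3.
Proof.
move=> len3; suff: (4 <= 3)%N by [].
apply: (@L_chain_size _ _ A S [:: 0; 1; 2; 3]%N) => -[|[|[|k]]] //= _.
- exact: set_length_strict len3 (_ : 0 < 3)%N.
- exact: set_length_strict len3 (_ : 1 < 3)%N.
- exact: set_length_last len3.
Qed.

Lemma no_length5_in_dim4 (A : nalg F 4) S : ~ set_length A S 5.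
Proof.
move=> len5; suff: (5 <= 4)%N by [].
apply: (@L_chain_size _ _ A S [:: 0; 1; 2; 4; 5]%N) => -[|[|[|[|k]]]] //= _.
- exact: set_length_strict len5 (_ : 0 < 5)%N.
- exact: set_length_strict len5 (_ : 1 < 5)%N.
- exact: set_length_strict len5 (_ : 2 < 5)%N.
- exact: set_length_last len5.
Qed.

End UpperBounds.

Section Dim5.
Variables (F : fieldType) (A : nalg F 5) (S : seq 'rV[F]_5).
Hypothesis len7 : set_length A S 7.

Lemma L_incl_3_2 : L_incl A S 3 2.
Proof.
apply: NNPP => strict; suff: (6 <= 5)%N by [].
apply: (@L_chain_size _ _ A S [:: 0; 1; 2; 3; 6; 7]%N) => -[|[|[|[|[|k]]]]] //= _.
- exact: set_length_strict len7 (_ : 0 < 7)%N.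
- exact: set_length_strict len7 (_ : 1 < 7)%N.
- exact: set_length_strict len7 (_ : 3 < 7)%N.
- exact: set_length_last len7.
Qed.

Lemma L_incl_5_4 : L_incl A S 5 4.
Proof.
apply: NNPP => strict; suff: (6 <= 5)%N by [].
apply: (@L_chain_size _ _ A S [:: 0; 1; 2; 4; 5; 7]%N) => -[|[|[|[|[|k]]]]] //= _.
- exact: set_length_strict len7 (_ : 0 < 7)%N.
- exact: set_length_strict len7 (_ : 1 < 7)%N.
- exact: set_length_strict len7 (_ : 2 < 7)%N.
- exact: not_L_incl_widen (set_length_last len7) _ _.
Qed.

Lemma L_incl_6_5 : L_incl A S 6 5.
Proof.
apply: NNPP => strict; suff: (6 <= 5)%N by [].
apply: (@L_chain_size _ _ A S [:: 0; 1; 2; 4; 6; 7]%N) => -[|[|[|[|[|k]]]]] //= _.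
- exact: set_length_strict len7 (_ : 0 < 7)%N.
- exact: set_length_strict len7 (_ : 1 < 7)%N.
- exact: set_length_strict len7 (_ : 2 < 7)%N.
- exact: not_L_incl_widen strict _ _.
- exact: set_length_last len7.
Qed.

Lemma no_length7_in_dim5 : False.
Proof.
apply: (set_length_last len7).
apply: (@L_incl_succ _ _ A S (nth 0%N [:: 0; 1; 2; 2; 4; 4; 4]%N)) => //.
  move=> i /andP[i_gt0 i_le6].
  case: i i_gt0 i_le6 => [|[|[|[|[|[|[|i]]]]]]] //= _ _.
  - exact: L_incl_le.
  - exact: L_incl_le.
  - exact: L_incl_3_2.
  - exact: L_incl_le.
  - exact: L_incl_5_4.
  - exact: L_incl_trans L_incl_6_5 L_incl_5_4.
move=> i j i_gt0 j_gt0 ij; have -> : j = (7 - i)%N by lia.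
have : (i < 7)%N by lia.
by case: i {i_gt0 j_gt0 ij} => [|[|[|[|[|[|[|i]]]]]]].
Qed.

End Dim5.

Section GradedAlgebra.
Variables (F : fieldType) (m : nat) (dg : nat -> nat).
Local Notation V := 'rV[F]_m.+1.

Definition evec (i : 'I_m.+1) : V := delta_mx 0 i.

(* Equal to m.+1 when no basis vector has degree dg p + dg q. *)
Definition deg_index (p q : nat) : nat :=
  find (fun k => dg k == (dg p + dg q)%N) (iota 0 m.+1).

Definition basis_mul (i j : 'I_m.+1) : V :=
  if i == ord0 then evec j else if j == ord0 then evec i
  else if (deg_index i j < m.+1)%N then evec (inord (deg_index i j)) else 0.

Definition gmul (x y : V) : V :=
  \sum_(i < m.+1) \sum_(j < m.+1) (x 0 i * y 0 j) *: basis_mul i j.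

Lemma evecE (i k : 'I_m.+1) : evec i 0 k = (k == i)%:R.
Proof. by rewrite mxE eqxx. Qed.

Lemma deg_index_deg p q : (deg_index p q < m.+1)%N ->
  dg (deg_index p q) = (dg p + dg q)%N.
Proof.
move=> found; have := found; rewrite -[X in (_ < X)%N](size_iota 0) -has_find.
by move=> /(nth_find 0%N) /eqP; rewrite nth_iota.
Qed.

Lemma gmul_linl (a : F) (x y z : V) : gmul (a *: x + y) z = a *: gmul x z + gmul y z.
Proof.
rewrite /gmul scaler_sumr -big_split; apply: eq_bigr => i _.
rewrite scaler_sumr -big_split; apply: eq_bigr => j _.
by rewrite !mxE mulrDl scalerDl scalerA mulrA.
Qed.

Lemma gmul_linr (a : F) (x y z : V) : gmul z (a *: x + y) = a *: gmul z x + gmul z y.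
Proof.
rewrite /gmul scaler_sumr -big_split; apply: eq_bigr => i _.
rewrite scaler_sumr -big_split; apply: eq_bigr => j _.
by rewrite !mxE mulrDr scalerDl scalerA mulrCA.
Qed.

Lemma gmul_evec (p q : 'I_m.+1) : gmul (evec p) (evec q) = basis_mul p q.
Proof.
rewrite /gmul (bigD1 p) //= [X in _ + X]big1 => [|i /negPf ip]; last first.
  by apply: big1 => j _; rewrite evecE ip mul0r scale0r.
rewrite addr0 (bigD1 q) //= [X in _ + X]big1 => [|j /negPf jq]; last first.
  by rewrite !evecE jq eqxx mulr0 scale0r.
by rewrite !evecE !eqxx mulr1 scale1r addr0.
Qed.

Lemma gmul1l (x : V) : gmul (evec ord0) x = x.
Proof.
rewrite /gmul (bigD1 ord0) //= [X in _ + X]big1 => [|i /negPf i0]; last first.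
  by apply: big1 => j _; rewrite evecE i0 mul0r scale0r.
rewrite addr0 [RHS]row_sum_delta; apply: eq_bigr => j _.
by rewrite evecE eqxx mul1r /basis_mul eqxx.
Qed.

Lemma gmul1r (x : V) : gmul x (evec ord0) = x.
Proof.
rewrite /gmul [RHS]row_sum_delta; apply: eq_bigr => i _.
rewrite (bigD1 ord0) //= [X in _ + X]big1 => [|j /negPf j0]; last first.
  by rewrite evecE j0 mulr0 scale0r.
rewrite addr0 evecE eqxx mulr1 /basis_mul eqxx.
by case: eqP => [-> | _].
Qed.

Definition galg : nalg F m.+1 := NAlg gmul_linl gmul_linr gmul1l gmul1r.

Hypothesis dg0 : dg 0 = 0%N.

Lemma basis_mul_deg (i j k : 'I_m.+1) : basis_mul i j 0 k != 0 ->
  dg k = (dg i + dg j)%N.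
Proof.
rewrite /basis_mul; have [-> | _] := eqVneq i ord0.
  by rewrite evecE dg0 add0n; have [-> | _] := eqVneq k j; rewrite ?eqxx.
have [-> | _] := eqVneq j ord0.
  by rewrite evecE dg0 addn0; have [-> | _] := eqVneq k i; rewrite ?eqxx.
case: ifP => [found | _]; last by rewrite mxE eqxx.
rewrite evecE; have [-> _ | _] := eqVneq k (inord (deg_index i j)); last by rewrite eqxx.
by rewrite inordK // deg_index_deg.
Qed.

Lemma gmul_support (x y : V) k : gmul x y 0 k != 0 ->
  exists i j, [/\ x 0 i != 0, y 0 j != 0 & dg k = (dg i + dg j)%N].
Proof.
move=> nz; apply: NNPP => none; move: nz; rewrite summxE big1 ?eqxx // => i _.
rewrite summxE big1 // => j _; rewrite mxE.
have [-> | xi] := eqVneq (x 0 i) 0; first by rewrite !mul0r.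
have [-> | yj] := eqVneq (y 0 j) 0; first by rewrite mulr0 mul0r.
have [-> | /basis_mul_deg deg] := eqVneq (basis_mul i j 0 k) 0.
  by rewrite mulr0.
by case: none; exists i, j.
Qed.

Definition deg_ge (a : nat) (v : V) := forall i, v 0 i != 0 -> (a <= dg i)%N.
Definition deg_le (b : nat) (v : V) := forall i, v 0 i != 0 -> (dg i <= b)%N.

Lemma deg_ge_mul a b x y : deg_ge a x -> deg_ge b y -> deg_ge (a + b) (gmul x y).
Proof.
move=> ax bx k /gmul_support [i [j [xi yj ->]]].
exact: leq_add (ax _ xi) (bx _ yj).
Qed.

Lemma deg_le_mul a b x y : deg_le a x -> deg_le b y -> deg_le (a + b) (gmul x y).
Proof.
move=> ax bx k /gmul_support [i [j [xi yj ->]]].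
exact: leq_add (ax _ xi) (bx _ yj).
Qed.

Lemma ord_in_iota1 (i : 'I_m.+1) : i != ord0 -> (i : nat) \in iota 1 m.
Proof.
move=> i0; rewrite mem_iota add1n ltn_ord andbT lt0n.
by apply: contra i0 => /eqP i0; apply/eqP/val_inj.
Qed.

Lemma evec_deg_le (i : 'I_m.+1) : deg_le (dg i) (evec i).
Proof. by move=> k; rewrite evecE; have [-> | _] := eqVneq k i; rewrite ?eqxx. Qed.

Lemma basis_mul_deg_index (p q i : 'I_m.+1) : p != ord0 -> q != ord0 ->
  deg_index p q = i -> basis_mul p q = evec i.
Proof.
by move=> /negPf p0 /negPf q0 pq_i; rewrite /basis_mul p0 q0 pq_i ltn_ord inord_val.
Qed.

Variable top : nat.
Hypothesis dg_pos : all (fun i => 0 < dg i <= top)%N (iota 1 m).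

Lemma dg_gt0 (i : 'I_m.+1) : i != ord0 -> (0 < dg i)%N.
Proof. by move=> /ord_in_iota1 /(allP dg_pos) /andP[]. Qed.

Lemma dg_le_top (i : 'I_m.+1) : (dg i <= top)%N.
Proof.
have [-> | /ord_in_iota1 /(allP dg_pos) /andP[] //] := eqVneq i ord0.
by rewrite dg0.
Qed.

Lemma word_vanish (T : seq V) d w : {in T, forall t : V, t 0 ord0 = 0} ->
  is_word galg T d w -> (top < d)%N -> w = 0.
Proof.
move=> T0 wd top_d; have ge_d : deg_ge d w.
  elim: wd {top_d} => [|t /T0 t0|i j x y _ _ _ gx _ gy].
  - by move=> i _.
  - by move=> i; have [-> | /dg_gt0] := eqVneq i ord0; rewrite ?t0 ?eqxx.
  - exact: deg_ge_mul.
apply/rowP => i; rewrite mxE; apply/eqP; apply: contraT => /ge_d.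
by rewrite leqNgt (leq_ltn_trans (dg_le_top i) top_d).
Qed.

Lemma galg_set_length_le S k : set_length galg S k -> (k <= top)%N.
Proof.
move=> [full min_k]; apply: min_k => v.
pose T := [seq s - s 0 ord0 *: evec ord0 | s : V <- S].
have ST : {in S, forall s, inL galg T 1 s}.
  move=> s s_in; have -> : s = s 0 ord0 *: evec ord0 + (s - s 0 ord0 *: evec ord0).
    by rewrite addrC subrK.
  apply: (proj2 (lin_closed_inL galg T 1)); first exact: inL_one.
  exact/(inL_word (leqnn 1))/word_gen/map_f.
have TS : {in T, forall t, inL galg S 1 t}.
  move=> _ /mapP[s s_in ->]; rewrite addrC -scaleNr.
  apply: (proj2 (lin_closed_inL galg S 1)); first exact: inL_one.
  exact: inL_word (leqnn 1) (word_gen _ s_in).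
apply: inL_transfer TS _; have := inL_transfer ST (full v).
apply: inL_ind => [|d w _ wd]; first exact: lin_closed_inL.
have [d_le | top_d] := leqP d top; first exact: inL_word wd.
rewrite (word_vanish _ wd top_d); first exact: (proj1 (lin_closed_inL _ _ _)).
by move=> _ /mapP[s _ ->]; rewrite !mxE eqxx mulr1 subrr.
Qed.

Hypothesis dg_top : has (fun i => dg i == top) (iota 0 m.+1).
Hypothesis dg_split : all (fun i => (dg i == 1%N) ||
  has (fun p => has (fun q => deg_index p q == i) (iota 1 m)) (iota 1 m)) (iota 1 m).

Definition deg1_vecs : seq V :=
  [seq evec i | i : 'I_m.+1 <- enum 'I_m.+1 & dg i == 1%N].

Lemma evec_word (i : 'I_m.+1) : is_word galg deg1_vecs (dg i) (evec i).
Proof.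
suff: forall d (i : 'I_m.+1), dg i = d -> is_word galg deg1_vecs (dg i) (evec i).
  by apply.
move=> {i}; elim/ltn_ind=> d IHd i di; have [-> | i0] := eqVneq i ord0.
  by rewrite dg0; apply: word_one.
case/orP: (allP dg_split _ (ord_in_iota1 i0)) => [/eqP dg1 | ].
  by rewrite dg1; apply/word_gen/map_f; rewrite mem_filter dg1 mem_enum.
case/hasP=> p /[!mem_iota] p_in /hasP[q /[!mem_iota] q_in /eqP pq_i].
pose p' : 'I_m.+1 := inord p; have p'E : p' = p :> nat by rewrite inordK //; lia.
pose q' : 'I_m.+1 := inord q; have q'E : q' = q :> nat by rewrite inordK //; lia.
have [p'0 q'0] : p' != ord0 /\ q' != ord0 by split; apply/eqP => /(congr1 val) /=; lia.
have dgi : dg i = (dg p' + dg q')%N by rewrite -pq_i p'E q'E deg_index_deg // pq_i.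
have [dp dq] : (dg p' < d)%N /\ (dg q' < d)%N.
  by rewrite -di dgi; have := dg_gt0 p'0; have := dg_gt0 q'0; lia.
have := is_word_mul (IHd _ dp p' erefl) (IHd _ dq q' erefl).
by rewrite -dgi /= gmul_evec (@basis_mul_deg_index _ _ i p'0 q'0) // p'E q'E.
Qed.

Lemma galg_set_length_deg1 : set_length galg deg1_vecs top.
Proof.
split=> [v | k full].
  rewrite [v]row_sum_delta; apply: lin_closed_sum => [|i]; first exact: lin_closed_inL.
  exact: inL_word (dg_le_top i) (evec_word i).
have [t t_in /eqP dgt] := hasP dg_top.
pose t' : 'I_m.+1 := inord t; have dgt' : dg t' = top.
  by rewrite inordK //; move: t_in; rewrite mem_iota.
have le_d d w : is_word galg deg1_vecs d w -> deg_le d w.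
  elim=> {d w} [|_ /mapP[i] /[!mem_filter] /andP[/eqP dgi _] ->|i j x y _ _ _ lx _ ly].
  - by rewrite -dg0; apply: evec_deg_le.
  - by rewrite -dgi; apply: evec_deg_le.
  - exact: deg_le_mul.
rewrite leqNgt; apply/negP => k_lt.
suff : evec t' 0 t' = 0 by rewrite evecE eqxx => /eqP; rewrite oner_eq0.
apply: (inL_ind (Q := fun v : V => v 0 t' = 0) _ _ (full (evec t'))).
  by split=> [|a x y x0 y0]; rewrite !mxE ?x0 ?y0 ?mulr0 ?addr0.
move=> d w dk /le_d le_dw; apply/eqP; apply: contraT => /le_dw.
by rewrite dgt' leqNgt (leq_ltn_trans dk k_lt).
Qed.

Lemma galg_length : alg_length galg top.
Proof.
split; last by move=> S k _ /galg_set_length_le.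
have [full _] := galg_set_length_deg1.
by exists deg1_vecs; split; [exists top | exact: galg_set_length_deg1].
Qed.

End GradedAlgebra.

Local Close Scope ring_scope.

Lemma isB_intro (F : fieldType) n b : 0 < b ->
  (forall j, 1 <= j <= b -> exists A : nalg F n, alg_length A j) ->
  (forall (A : nalg F n) S, ~ set_length A S b.+1) -> isB F n b.
Proof.
move=> b_gt0 lengths no_next; split=> //; split=> // l _ all_l.
rewrite leqNgt; apply/negP => b_lt.
have [A [[S [_ lenS]] _]] := all_l b.+1 b_lt.
exact: no_next lenS.
Qed.

Ltac graded_algebra m degs :=
  exists (galg _ m (nth 0 degs)); apply: galg_length.

Theorem proposition4p9 (F : fieldType) :
  isB F 2 1 /\ isB F 3 2 /\ isB F 4 4 /\ isB F 5 6.
Proof.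
split; [|split; [|split]].
- apply: isB_intro (@no_length2_in_dim2 F) => // -[|[|j]] // _.
  by graded_algebra 1 [:: 0; 1].
- apply: isB_intro (@no_length3_in_dim3 F) => // -[|[|[|j]]] // _.
  + by graded_algebra 2 [:: 0; 1; 1].
  + by graded_algebra 2 [:: 0; 1; 2].
- apply: isB_intro (@no_length5_in_dim4 F) => // -[|[|[|[|[|j]]]]] // _.
  + by graded_algebra 3 [:: 0; 1; 1; 1].
  + by graded_algebra 3 [:: 0; 1; 1; 2].
  + by graded_algebra 3 [:: 0; 1; 2; 3].
  + by graded_algebra 3 [:: 0; 1; 2; 4].
- apply: isB_intro (@no_length7_in_dim5 F) => // -[|[|[|[|[|[|[|j]]]]]]] // _.
  + by graded_algebra 4 [:: 0; 1; 1; 1; 1].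
  + by graded_algebra 4 [:: 0; 1; 1; 1; 2].
  + by graded_algebra 4 [:: 0; 1; 1; 2; 3].
  + by graded_algebra 4 [:: 0; 1; 2; 3; 4].
  + by graded_algebra 4 [:: 0; 1; 2; 4; 5].
  + by graded_algebra 4 [:: 0; 1; 2; 4; 6].
Qed.
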